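(* In the setting below, let $I=\{i_A,\dots,i_B\}\subseteq\{0,\dots,n\}$ and $J=\{j_A,\dots,j_B\}\subseteq\{0,\dots,m\}$ be intervals of equal length $|I|=|J|$ such that every point of $I\times J$ is $2\Delta$-relevant. Then there are $a,b,c\in\mathbb{R}$ such that $|f(i)-(a i+b)|\le 2\Delta$ for all $i\in I$ and $|g(j)-(aj+c)|\le 2\Delta$ for all $j\in J$.
   Context: Setting: $f\colon\{0,\dots,n\}\to\mathbb{Z}$, $g\colon\{0,\dots,m\}\to\mathbb{Z}$, and convex functions $\breve f\colon\{0,\dots,n\}\to\mathbb{Q}$, $\breve g\colon\{0,\dots,m\}\to\mathbb{Q}$ (convex: $F(i)-F(i-1)\le F(i+1)-F(i)$ for interior $i$) with $\breve f\le f\le\breve f+\Delta$ and $\breve g\le g\le\breve g+\Delta$ pointwise, for some $\Delta\ge0$. Let $\breve h(k)=\min_{i+j=k}\breve f(i)+\breve g(j)$. A point $(i,j)$ is $\delta$-relevant if $\breve f(i)+\breve g(j)\le\breve h(i+j)+\delta$. *)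

From HB Require Import structures.
From mathcomp Require Import all_boot all_order all_algebra.
From mathcomp Require Export reals.
Set Implicit Arguments. Unset Strict Implicit. Unset Printing Implicit Defensive.
Import Order.TTheory GRing.Theory Num.Theory.
Local Open Scope ring_scope.

(* F : {0..n} -> rat, represented as nat -> rat; only values at 0..n matter. *)
Definition convex_on (n : nat) (F : nat -> rat) : Prop :=
  forall i : nat, (0 < i)%N -> (i < n)%N ->
    F i - F i.-1 <= F i.+1 - F i.

(* hb k = min_{i + j = k, 0<=i<=n, 0<=j<=m} fb i + gb j, for k in 0..n+m.
   The index i ranges over [k - m, min n k]; the neutral element of the
   iterated min is itself the value at i = k - m, so this is the exact min. *)
Definition hbreve (n m : nat) (fb gb : nat -> rat) (k : nat) : rat :=
  let lo := (k - m)%N in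
  \big[Num.min/(fb lo + gb (k - lo)%N)]_(lo <= i < (minn n k).+1)
     (fb i + gb (k - i)%N).

Definition relevant (n m : nat) (fb gb : nat -> rat) (delta : rat)
    (i j : nat) : Prop :=
  fb i + gb j <= hbreve n m fb gb (i + j) + delta.

From HB Require Import structures.
From mathcomp Require Import all_boot all_order all_algebra.
From mathcomp Require Import reals ring lra zify.
Import Order.TTheory GRing.Theory Num.Theory.
Local Open Scope ring_scope.

(* Let L = |I| - 1 = |J| - 1 and k = iA + jB.  Every point (i, k - i), i in I,
   of the box I x J lies on the antidiagonal i + j = k, and so do the corners
   (iA, jB) and (iB, jA).  Since these two corners are 2Δ-relevant and hbreve k
   is the minimum of fb i + gb j along the antidiagonal, fb i + gb (k - i)
   stays above the linear interpolation of its corner values, up to 2Δ.  On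
   the other hand a discrete convex function lies below its chords.  Both
   facts together squeeze fb between its chord over I and that chord minus 2Δ,
   and likewise gb over J; the corners also show that the two chord slopes
   differ by at most 2Δ/L.  Replacing both slopes by their mean and shifting
   by a suitable constant then fits f and g within 2Δ, since f and g lie
   within Δ above fb and gb. *)

Section DiscreteConvexity.
Variables (K : realDomainType) (n : nat) (F : nat -> K).
Hypothesis convexF : forall i : nat, (0 < i)%N -> (i < n)%N ->
  F i - F i.-1 <= F i.+1 - F i.

Let incr (i : nat) : K := F i.+1 - F i.

Lemma incr_mono i j : (i <= j)%N -> (j < n)%N -> incr i <= incr j.
Proof.
elim: j => [|j IH] le_ij lt_jn; first by have -> : i = 0%N by lia.
case: (ltngtP i j.+1) => [lt_ij||->] //; last by lia.
have step : incr j <= incr j.+1 by apply: convexF; lia.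
apply: le_trans step; apply: IH; lia.
Qed.

(* Both chord pieces are
   telescoping sums of increments, compared with the increment at q - 1. *)
Lemma chord_upper p q r : (p <= q)%N -> (q <= r)%N -> (r <= n)%N ->
  (r - p)%:R * F q <= (r - p)%:R * F p + (q - p)%:R * (F r - F p).
Proof.
move=> le_pq le_qr le_rn.
case: (eqVneq p q) => [<-|ne_pq]; first by rewrite subnn mul0r addr0.
set c := incr q.-1.
have before : F q - F p <= (q - p)%:R * c.
  rewrite -(telescope_sumr F le_pq) mulr_natl -sumr_const_nat.
  by apply: ler_sum_nat => k /andP[_ lt_kq]; apply: incr_mono; lia.
have after : (r - q)%:R * c <= F r - F q.
  rewrite -(telescope_sumr F le_qr) mulr_natl -sumr_const_nat.
  by apply: ler_sum_nat => k /andP[le_qk lt_kr]; apply: incr_mono; lia.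
have -> : (r - p)%:R = (q - p)%:R + (r - q)%:R :> K.
  by rewrite -natrD; congr _%:R; lia.
have prod1 := ler_wpM2l (ler0n K (r - q)) before.
have prod2 := ler_wpM2l (ler0n K (q - p)) after.
nra.
Qed.
End DiscreteConvexity.

Lemma hbreve_le (n m : nat) (fb gb : nat -> rat) (i j : nat) :
  (i <= n)%N -> (j <= m)%N -> hbreve n m fb gb (i + j) <= fb i + gb j.
Proof.
move=> le_in le_jm; rewrite /hbreve.
apply: le_trans (@ge_bigmin_seq _ _ _ _ _ i _ _ _ _) _ => //.
  by rewrite mem_index_iota; apply/andP; split; lia.
by rewrite addKn.
Qed.

(* The fitting step: if X is within 2D below the chord A0 + t S / L and F
   lies within D above X, then F is within 2D of the line of slope
   a = (S + S') / (2L), the mean of S / L and S' / L, shifted by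
   (S - S') / 4 - D / 2, provided |S - S'| <= 2D; the key estimate is
   |(S - S')(2t - L)| <= 2DL. *)
Lemma affine_fit (K : realFieldType) (L t D A0 S S' X F a : K) :
  0 < L -> 0 <= t <= L -> 0 <= D -> `|S - S'| <= 2 * D ->
  a * (2 * L) = S + S' ->
  L * A0 + t * S - 2 * D * L <= L * X <= L * A0 + t * S ->
  X <= F <= X + D ->
  `|F - (A0 + t * a + ((S - S') / 4 - D / 2))| <= 2 * D.
Proof.
move=> L_gt0 /andP[t_ge0 le_tL] D_ge0 gap def_a /andP[X_lo X_hi] /andP[F_lo F_hi].
have gap_t : `|(S - S') * (2 * t - L)| <= 2 * D * L.
  rewrite normrM; apply: ler_pM => //.
  by rewrite ler_norml; apply/andP; split; lra.
have scaled : L * (F - (A0 + t * a + ((S - S') / 4 - D / 2))) =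
    L * F - L * A0 - t * (S + S') / 2 - L * (S - S') / 4 + L * D / 2.
  by rewrite -def_a; field.
move: gap_t; rewrite !ler_norml => /andP[gap_lo gap_hi].
have LF_lo := ler_wpM2l (ltW L_gt0) F_lo.
have LF_hi := ler_wpM2l (ltW L_gt0) F_hi.
apply/andP; split; rewrite -(ler_pM2l L_gt0) scaled; nra.
Qed.

Lemma line_shift (K : comNzRingType) (a A0 e : K) (p q : nat) : (p <= q)%N ->
  a * q%:R + (A0 - a * p%:R + e) = A0 + (q - p)%:R * a + e.
Proof. by move=> le_pq; rewrite natrB //; ring. Qed.

Section RelevantBox.
Variables (n m : nat) (f g : nat -> int) (fb gb : nat -> rat) (Delta : rat).
Variables (iA iB jA jB : nat).
Hypothesis Delta_ge0 : 0 <= Delta.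
Hypotheses (convex_fb : convex_on n fb) (convex_gb : convex_on m gb).
Hypothesis f_near_fb : forall i, (i <= n)%N -> fb i <= (f i)%:~R <= fb i + Delta.
Hypothesis g_near_gb : forall j, (j <= m)%N -> gb j <= (g j)%:~R <= gb j + Delta.
Hypotheses (le_iAB : (iA <= iB)%N) (le_iBn : (iB <= n)%N).
Hypotheses (le_jAB : (jA <= jB)%N) (le_jBm : (jB <= m)%N).
Hypothesis same_length : (iB - iA)%N = (jB - jA)%N.
Hypothesis box_relevant : forall i j, (iA <= i <= iB)%N -> (jA <= j <= jB)%N ->
  relevant n m fb gb (2 * Delta) i j.

Let L : rat := (iB - iA)%:R.
Let hmin : rat := hbreve n m fb gb (iA + jB).

Lemma corners_near_min :
  fb iA + gb jB <= hmin + 2 * Delta /\ fb iB + gb jA <= hmin + 2 * Delta.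
Proof.
split; first by apply: box_relevant; apply/andP; split.
rewrite /hmin (_ : iA + jB = iB + jA)%N; last by lia.
by apply: box_relevant; apply/andP; split.
Qed.

Lemma slope_gap : `|(fb iB - fb iA) - (gb jB - gb jA)| <= 2 * Delta.
Proof.
have [corner1 corner2] := corners_near_min.
have min1 : hmin <= fb iA + gb jB by apply: hbreve_le; lia.
have min2 : hmin <= fb iB + gb jA.
  by rewrite /hmin (_ : iA + jB = iB + jA)%N; [apply: hbreve_le|]; lia.
by rewrite ler_norml; apply/andP; split; lra.
Qed.

Lemma antidiagonal_lower i j : (iA <= i <= iB)%N -> (i + j = iA + jB)%N ->
  (j - jA)%:R * (fb iA + gb jB) + (i - iA)%:R * (fb iB + gb jA) - 2 * Delta * L
    <= L * (fb i + gb j).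
Proof.
move=> /andP[le_Ai le_iB] diag.
have [corner1 corner2] := corners_near_min.
have pair_min : hmin <= fb i + gb j by rewrite /hmin -diag; apply: hbreve_le; lia.
have -> : L = (j - jA)%:R + (i - iA)%:R by rewrite /L -natrD; congr _%:R; lia.
have w1 := ler_wpM2l (ler0n _ (j - jA)) corner1.
have w2 := ler_wpM2l (ler0n _ (i - iA)) corner2.
have w3 := ler_wpM2l (ler0n _ (j - jA)) pair_min.
have w4 := ler_wpM2l (ler0n _ (i - iA)) pair_min.
lra.
Qed.

Lemma fb_below_chord i : (iA <= i <= iB)%N ->
  L * fb i <= L * fb iA + (i - iA)%:R * (fb iB - fb iA).
Proof.
by move=> /andP[le_Ai le_iB]; rewrite /L; apply: (@chord_upper _ n fb convex_fb).
Qed.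

Lemma gb_below_chord j : (jA <= j <= jB)%N ->
  L * gb j <= L * gb jA + (j - jA)%:R * (gb jB - gb jA).
Proof.
move=> /andP[le_Aj le_jB]; rewrite /L same_length.
by apply: (@chord_upper _ m gb convex_gb).
Qed.

Lemma fb_near_chord i : (iA <= i <= iB)%N ->
  L * fb iA + (i - iA)%:R * (fb iB - fb iA) - 2 * Delta * L <= L * fb i.
Proof.
move=> hi; have /andP[le_Ai le_iB] := hi.
pose j := (iA + jB - i)%N.
have hj : (jA <= j <= jB)%N by apply/andP; split; lia.
have diag : (i + j = iA + jB)%N by lia.
have pair := antidiagonal_lower i j hi diag.
have gb_chord := gb_below_chord j hj.
have wj : (j - jA)%:R = L - (i - iA)%:R :> rat.
  by rewrite /L -natrB; [congr _%:R|]; lia.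
rewrite wj in pair gb_chord.
lra.
Qed.

Lemma gb_near_chord j : (jA <= j <= jB)%N ->
  L * gb jA + (j - jA)%:R * (gb jB - gb jA) - 2 * Delta * L <= L * gb j.
Proof.
move=> hj; have /andP[le_Aj le_jB] := hj.
pose i := (iA + jB - j)%N.
have hi : (iA <= i <= iB)%N by apply/andP; split; lia.
have diag : (i + j = iA + jB)%N by lia.
have pair := antidiagonal_lower i j hi diag.
have fb_chord := fb_below_chord i hi.
have wi : (i - iA)%:R = L - (j - jA)%:R :> rat.
  by rewrite /L -natrB; [congr _%:R|]; lia.
rewrite wi in pair fb_chord.
lra.
Qed.

Lemma box_affine_fit : exists a b c : rat,
  (forall i, (iA <= i <= iB)%N -> `|(f i)%:~R - (a * i%:R + b)| <= 2 * Delta) /\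
  (forall j, (jA <= j <= jB)%N -> `|(g j)%:~R - (a * j%:R + c)| <= 2 * Delta).
Proof.
have D2_ge0 : 0 <= 2 * Delta by rewrite mulr_ge0.
case: (posnP (iB - iA)) => [L_eq0|L_gt0].
  exists 0, (f iA)%:~R, (g jA)%:~R.
  split=> [i hi|j hj]; rewrite mul0r add0r.
    by rewrite (_ : i = iA) ?subrr ?normr0 //; lia.
  by rewrite (_ : j = jA) ?subrr ?normr0 //; lia.
set SA := fb iB - fb iA; set SB := gb jB - gb jA.
pose a := (SA + SB) / (2 * L).
have L_pos : 0 < L by rewrite ltr0n.
have def_a : a * (2 * L) = SA + SB by rewrite /a divfK // mulf_neq0 // lt0r_neq0.
exists a, (fb iA - a * iA%:R + ((SA - SB) / 4 - Delta / 2)),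
          (gb jA - a * jA%:R + ((SB - SA) / 4 - Delta / 2)).
split=> [i hi|j hj].
  have /andP[le_Ai le_iB] := hi.
  have t_range : (0 : rat) <= (i - iA)%:R <= L.
    by apply/andP; split; [exact: ler0n | rewrite /L ler_nat; lia].
  have chord := conj (fb_near_chord i hi) (fb_below_chord i hi).
  rewrite line_shift //.
  apply: affine_fit L_pos t_range Delta_ge0 slope_gap def_a _ _.
    by apply/andP; exact: chord.
  by apply: f_near_fb; lia.
have /andP[le_Aj le_jB] := hj.
have t_range : (0 : rat) <= (j - jA)%:R <= L.
  by apply/andP; split; [exact: ler0n | rewrite /L ler_nat; lia].
have chord := conj (gb_near_chord j hj) (gb_below_chord j hj).
have gap : `|SB - SA| <= 2 * Delta by rewrite distrC slope_gap.
have def_a' : a * (2 * L) = SB + SA by rewrite def_a addrC.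
rewrite line_shift //.
apply: affine_fit L_pos t_range Delta_ge0 gap def_a' _ _.
  by apply/andP; exact: chord.
by apply: g_near_gb; lia.
Qed.
End RelevantBox.

Lemma ratr_affine_dev (K : numFieldType) (z : int) (x : nat) (a b e : rat) :
  `|z%:~R - (a * x%:R + b)| <= e ->
  `|(z%:~R : K) - (ratr a * x%:R + ratr b)| <= ratr e.
Proof.
by rewrite -(ler_rat K) ratr_norm rmorphB rmorphD rmorphM rmorph_int rmorph_nat.
Qed.

Theorem mainTheorem14 (R : realType) (n m : nat)
    (f g : nat -> int) (fb gb : nat -> rat) (Delta : rat)
    (iA iB jA jB : nat) :
  0 <= Delta ->
  convex_on n fb -> convex_on m gb ->
  (forall i, (i <= n)%N -> fb i <= (f i)%:~R <= fb i + Delta) ->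
  (forall j, (j <= m)%N -> gb j <= (g j)%:~R <= gb j + Delta) ->
  (iA <= iB)%N -> (iB <= n)%N -> (jA <= jB)%N -> (jB <= m)%N ->
  (iB - iA)%N = (jB - jA)%N ->
  (forall i j, (iA <= i <= iB)%N -> (jA <= j <= jB)%N ->
     relevant n m fb gb (2 * Delta) i j) ->
  exists a b c : R,
    (forall i, (iA <= i <= iB)%N ->
       `|(f i)%:~R - (a * i%:R + b)| <= 2 * ratr Delta) /\
    (forall j, (jA <= j <= jB)%N ->
       `|(g j)%:~R - (a * j%:R + c)| <= 2 * ratr Delta).
Proof.
move=> Delta_ge0 cvx_fb cvx_gb near_f near_g le_iAB le_iBn le_jAB le_jBm
  same_len rel.
have [a [b [c [fit_f fit_g]]]] := @box_affine_fit n m f g fb gb Delta iA iB jA jB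
  Delta_ge0 cvx_fb cvx_gb near_f near_g le_iAB le_iBn le_jAB le_jBm same_len rel.
have two_Delta : ratr (2 * Delta) = 2 * ratr Delta :> R.
  by rewrite rmorphM rmorph_nat.
exists (ratr a), (ratr b), (ratr c).
by split=> [i /fit_f | j /fit_g] /(ratr_affine_dev R); rewrite two_Delta.
Qed.
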